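(* The linear map $F(L)\to F(A)$ sending the class of $a\otimes b$ ($a,b\in L$) to $\operatorname{tr}(ab)$ is injective.
   Context: $A=\mathbb{R}\langle x,y\rangle$ is the free associative algebra and $L\subset A$ the free Lie algebra on $x,y$ (smallest Lie subalgebra of $(A,[a,b]=ab-ba)$ containing $x,y$). $F(A)$ is the quotient of $A\otimes A$ by the span of $a\otimes b-b\otimes a$ and $a\otimes bc-ab\otimes c$, identified with $A/\operatorname{span}\{ab-ba\}$ via $a\otimes b\mapsto \operatorname{tr}(ab)$, where $\operatorname{tr}$ denotes the projection $A\to A/\operatorname{span}\{ab-ba\}$. $F(L)$ is the quotient of $L\otimes L$ by the span of $a\otimes b-b\otimes a$ and $a\otimes[b,c]-[a,b]\otimes c$ ($a,b,c\in L$). *)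

From HB Require Import structures.
From mathcomp Require Import all_boot all_order all_algebra.
From mathcomp Require Import reals.
Set Implicit Arguments. Unset Strict Implicit. Unset Printing Implicit Defensive.
Import Order.TTheory GRing.Theory Num.Theory.
Local Open Scope ring_scope.

(* Words in the two letters x (= false) and y (= true). *)
Definition word := seq bool.

Section FreeAlg.
Variable R : realType.

(* Elements of R<x,y> (and of R<<x,y>>) are coefficient functions on words;
   the free algebra A is the subspace of finitely supported ones. *)
Definition fin_supp (f : word -> R) : Prop :=
  exists s : seq word, forall w, w \notin s -> f w = 0.

Definition letter (b : bool) : word -> R :=
  fun w => if w == [:: b] then 1 else 0.
Definition X : word -> R := letter false.
Definition Y : word -> R := letter true.

(* concatenation (convolution) product *)
Definition amul (f g : word -> R) : word -> R :=
  fun w => \sum_(i < (size w).+1) f (take i w) * g (drop i w).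

Definition aadd (f g : word -> R) : word -> R := fun w => f w + g w.
Definition asub (f g : word -> R) : word -> R := fun w => f w - g w.
Definition ascale (c : R) (f : word -> R) : word -> R := fun w => c * f w.
Definition azero : word -> R := fun _ => 0.

Definition bracket (f g : word -> R) : word -> R := asub (amul f g) (amul g f).

Definition lie_closed (S : (word -> R) -> Prop) : Prop :=
  [/\ S azero,
      (forall f g, S f -> S g -> S (aadd f g)),
      (forall c f, S f -> S (ascale c f)) &
      (forall f g, S f -> S g -> S (bracket f g))].

(* The free Lie algebra L: smallest Lie subalgebra containing x and y. *)
Definition inL (f : word -> R) : Prop :=
  forall S : (word -> R) -> Prop, lie_closed S -> S X -> S Y -> S f.

Definition lspan (T : Type) (P : (T -> R) -> Prop) (v : T -> R) : Prop :=
  exists (m : nat) (c : nat -> R) (g : nat -> T -> R),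
    (forall i, (i < m)%N -> P (g i)) /\
    (forall t, v t = \sum_(i < m) c i * g i t).

(* span{ab - ba : a, b in A}, the kernel of tr : A -> A/[A,A] *)
Definition comm_gen (f : word -> R) : Prop :=
  exists a b, fin_supp a /\ fin_supp b /\ f = asub (amul a b) (amul b a).

(* A ⊗ A realized as (finitely supported) functions on pairs of words *)
Definition tens (a b : word -> R) : word * word -> R := fun p => a p.1 * b p.2.

(* relations defining F(L) as a quotient of L ⊗ L *)
Definition FL_rel (t : word * word -> R) : Prop :=
  (exists a b, inL a /\ inL b /\
     t = (fun p => tens a b p - tens b a p)) \/
  (exists a b c, inL a /\ inL b /\ inL c /\
     t = (fun p => tens a (bracket b c) p - tens (bracket a b) c p)).

End FreeAlg.

From HB Require Import structures.
From mathcomp Require Import all_boot all_order all_algebra.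
From mathcomp Require Import reals.
From mathcomp Require Import boolp functions.
From mathcomp Require Import ring.
Import GRing.Theory Num.Theory.
Local Open Scope ring_scope.
Set Implicit Arguments. Unset Strict Implicit. Unset Printing Implicit Defensive.

(* For a word w = w_1 ... w_n let
     Ψ(w) := (n(n-1))⁻¹ Σ_{rotations w' of w} x_{w'_1} ⊗ [w'_2, [w'_3, ..., w'_n]],
   extended linearly to A.  Ψ is invariant under rotation, hence kills every ab - ba.
   Modulo the relations of F(L), Ψ(ab) ≡ a ⊗ b for a, b ∈ L; by bilinearity a and b may
   be taken to be Lie monomials, of degrees p and q.  Moving letters across ⊗ with
   x ⊗ [y, z] ≡ [x, y] ⊗ z and with symmetry turns the sum over rotations of w into the
   unrotated term plus a sum, over the cuts w = uv, of (right-normed bracketing of u) ⊗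
   (left-normed bracketing of v).  The Dynkin-Specht-Wever identities and a quadratic
   analogue of them evaluate the result to (p(p-1) + 2pq + q(q-1)) a ⊗ b, which is
   (p+q)(p+q-1) a ⊗ b.  So if Σ a_i b_i ∈ span{ab - ba}, then
   Σ a_i ⊗ b_i ≡ Ψ(Σ a_i b_i) = 0 in F(L). *)

Lemma sum_triangle (V : nmodType) n (F : nat -> nat -> V) :
  \sum_(0 <= i < n.+1) \sum_(0 <= j < (n - i).+1) F i (j + i) =
  \sum_(0 <= k < n.+1) \sum_(0 <= i < k.+1) F i k.
Proof.
have row i : (i < n.+1)%N -> \sum_(0 <= j < (n - i).+1) F i (j + i) =
    \sum_(0 <= k < n.+1 | (i <= k)%N) F i k.
  move=> lt_in; rewrite -subSn // -(big_addn 0 _ _ xpredT) add0n.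
  rewrite (big_cat_nat (leq0n i) (ltnW lt_in)) /=.
  rewrite [X in _ = X + _]big_nat_cond [X in _ = X + _]big_pred0 ?add0r; last first.
    by move=> k; case: leqP => [le_ik|]; rewrite ?andbF //= andbT ltnNge le_ik.
  rewrite [LHS]big_nat_cond [RHS]big_nat_cond; apply: eq_bigl => k.
  by rewrite andbT andbAC andbb.
rewrite (eq_big_nat _ _ (fun i (hi : (0 <= i < n.+1)%N) => row i (proj2 (andP hi)))).
rewrite (exchange_big_dep_nat (fun _ => true)) //=.
by apply: eq_big_nat => k /andP[_ lt_kn]; rewrite (@big_nat_widen _ _ _ 0 k.+1 n.+1).
Qed.

Lemma rot_cat_shift (T : Type) (u v : seq T) k :
  (k <= size v)%N -> rot (k + size u) (u ++ v) = rot k (v ++ u).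
Proof. by move=> le_kv; rewrite rotD ?rot_size_cat // size_cat addnC leq_add2l. Qed.

Lemma sum_rot_catC (T : Type) (V : nmodType) (F : seq T -> V) u v :
  \sum_(0 <= k < size (u ++ v)) F (rot k (u ++ v)) =
  \sum_(0 <= k < size (v ++ u)) F (rot k (v ++ u)).
Proof.
rewrite !size_cat (big_cat_nat (leq0n _) (leq_addr (size v) (size u))) /=.
rewrite [RHS](big_cat_nat (leq0n _) (leq_addr (size u) (size v))) /= addrC.
rewrite -{1}[size u]add0n big_addn addKn -{3}[size v]add0n big_addn addKn.
by congr (_ + _); apply: eq_big_nat => k /andP[_ /ltnW le_k]; rewrite rot_cat_shift.
Qed.

Definition scalef {R : pzRingType} {T : Type} (c : R) (f : T -> R) : T -> R :=
  fun x => c * f x.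
Arguments scalef {R T} c f _ /.

(* [T -> R] is not an lmodType over R (only [T -> R^o] is), so linearity of maps
   between function spaces is spelled out by hand. *)
Definition linearf {R : pzRingType} {T1 T2 : Type} (h : (T1 -> R) -> (T2 -> R)) :=
  forall c u v, h (scalef c u + v) = scalef c (h u) + h v.

Ltac pointwise := apply/funext => ?; rewrite ?fctE ?fct_sumE /=.

Section FreeAlgebra.
Variable R : realType.

Lemma scalef_linear (T : Type) c : linearf (@scalef R T c).
Proof. by move=> d f g; pointwise; ring. Qed.

Lemma scalefA (T : Type) c d (f : T -> R) : scalef c (scalef d f) = scalef (c * d) f.
Proof. by pointwise; rewrite mulrA. Qed.

Lemma scale1f (T : Type) (f : T -> R) : scalef 1 f = f.
Proof. by pointwise; rewrite mul1r. Qed.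

Lemma scaleN1f (T : Type) (f : T -> R) : scalef (-1) f = - f.
Proof. by pointwise; rewrite mulN1r. Qed.

Lemma scaleNf (T : Type) c (f : T -> R) : scalef (- c) f = - scalef c f.
Proof. by pointwise; rewrite mulNr. Qed.

Lemma scalefDl (T : Type) c d (f : T -> R) : scalef (c + d) f = scalef c f + scalef d f.
Proof. by pointwise; rewrite mulrDl. Qed.

Lemma scale0f (T : Type) (f : T -> R) : scalef 0 f = 0.
Proof. by pointwise; rewrite mul0r. Qed.

Section LinearfTheory.
Variables (T1 T2 : Type) (h : (T1 -> R) -> (T2 -> R)).
Hypothesis h_lin : linearf h.

Lemma linearf0 : h 0 = 0.
Proof.
have e : scalef (-1) 0 + 0 = 0 :> (T1 -> R) by rewrite scaleN1f oppr0 addr0.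
by rewrite -e h_lin scaleN1f addNr.
Qed.

Lemma linearfZ c f : h (scalef c f) = scalef c (h f).
Proof. by rewrite -[scalef c f]addr0 h_lin linearf0 addr0. Qed.

Lemma linearfD f g : h (f + g) = h f + h g.
Proof. by rewrite -[f in LHS]scale1f h_lin scale1f. Qed.

Lemma linearfN f : h (- f) = - h f.
Proof. by rewrite -scaleN1f linearfZ scaleN1f. Qed.

Lemma linearfB f g : h (f - g) = h f - h g.
Proof. by rewrite linearfD linearfN. Qed.

Lemma linearf_sum (I : Type) (r : seq I) (P : pred I) (F : I -> T1 -> R) :
  h (\sum_(i <- r | P i) F i) = \sum_(i <- r | P i) h (F i).
Proof. exact: (big_morph h linearfD linearf0). Qed.

End LinearfTheory.

Implicit Types f g h : word -> R.

Lemma amulA f g h : amul f (amul g h) = amul (amul f g) h.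
Proof.
apply/funext => w; rewrite /amul; set n := size w.
pose F i k := f (take i w) * g (drop i (take k w)) * h (drop k w).
transitivity (\sum_(0 <= i < n.+1) \sum_(0 <= j < (n - i).+1) F i (j + i)).
  rewrite big_mkord; apply: eq_bigr => i _.
  rewrite big_distrr /= size_drop big_mkord.
  by apply: eq_bigr => j _; rewrite /F mulrA take_drop drop_drop.
rewrite sum_triangle big_mkord; apply: eq_bigr => k _.
have le_kn : (k <= n)%N by rewrite -ltnS.
rewrite big_distrl /= size_takel // big_mkord; apply: eq_bigr => i _.
by rewrite /F take_takel // -ltnS.
Qed.

Lemma amul_linearl g : linearf (fun f => amul f g).
Proof.
move=> c f f'; pointwise; rewrite /amul big_distrr -big_split.
by apply: eq_bigr => i _ /=; ring.
Qed.

Lemma amul_linearr f : linearf (amul f).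
Proof.
move=> c g g'; pointwise; rewrite /amul big_distrr -big_split.
by apply: eq_bigr => i _ /=; ring.
Qed.

Lemma bracketE f g : bracket f g = amul f g - amul g f.
Proof. by []. Qed.

Lemma bracket_linearl g : linearf (fun f => bracket f g).
Proof.
move=> c f f'; rewrite !bracketE (amul_linearl g) (amul_linearr g).
by pointwise; ring.
Qed.

Lemma bracket_linearr f : linearf (bracket f).
Proof.
move=> c g g'; rewrite !bracketE (amul_linearl f) (amul_linearr f).
by pointwise; ring.
Qed.

Lemma bracketC f g : bracket g f = - bracket f g.
Proof. by rewrite !bracketE opprB. Qed.

Lemma jacobi f g h :
  bracket f (bracket g h) = bracket (bracket f g) h + bracket g (bracket f h).
Proof.
rewrite !bracketE !(linearfB (amul_linearl _)) !(linearfB (amul_linearr _)) !amulA.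
by pointwise; ring.
Qed.

Lemma tens_linearl g : linearf (fun f => tens f g).
Proof. by move=> c f f'; rewrite /tens; pointwise; ring. Qed.

Lemma tens_linearr f : linearf (tens f).
Proof. by move=> c g g'; rewrite /tens; pointwise; ring. Qed.

End FreeAlgebra.

Section Combinations.
Variable R : realType.
Implicit Types f g : word -> R.

(* A list s = [(c_1, w_1); ...] stands for the element Σ c_i w_i of A ([vec s]), and
   [combine G s] is the linear extension of G : word -> _ evaluated at it. *)
Definition combine {T : Type} (G : word -> T -> R) (s : seq (R * word)) : T -> R :=
  \sum_(p <- s) scalef p.1 (G p.2).

Definition comb_mul (s t : seq (R * word)) : seq (R * word) :=
  [seq (p.1 * q.1, p.2 ++ q.2) | p <- s, q <- t].
Definition comb_opp (s : seq (R * word)) := [seq (- p.1, p.2) | p <- s].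
Definition comb_scale c (s : seq (R * word)) := [seq (c * p.1, p.2) | p <- s].

Section CombineTheory.
Variable T : Type.
Implicit Types (G H : word -> T -> R) (s t : seq (R * word)).

Lemma combine_nil G : combine G [::] = 0.
Proof. by rewrite /combine big_nil. Qed.

Lemma combine_cons G p s : combine G (p :: s) = scalef p.1 (G p.2) + combine G s.
Proof. by rewrite /combine big_cons. Qed.

Lemma combine_cat G s t : combine G (s ++ t) = combine G s + combine G t.
Proof. by rewrite /combine big_cat. Qed.

Lemma combine_opp G s : combine G (comb_opp s) = - combine G s.
Proof. by rewrite /combine big_map -sumrN; apply: eq_bigr => p _; rewrite scaleNf. Qed.

Lemma combine_scale G c s : combine G (comb_scale c s) = scalef c (combine G s).
Proof.
rewrite /combine big_map (linearf_sum (scalef_linear c)).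
by apply: eq_bigr => p _; rewrite scalefA.
Qed.

Lemma combine_mul G s t :
  combine G (comb_mul s t) = combine (fun u => combine (fun v => G (u ++ v)) t) s.
Proof.
rewrite /combine /comb_mul big_allpairs_dep /=; apply: eq_bigr => p _.
rewrite (linearf_sum (scalef_linear _)); apply: eq_bigr => q _.
by rewrite scalefA.
Qed.

Lemma combine_linear (T' : Type) (h : (T -> R) -> (T' -> R)) G s :
  linearf h -> combine (fun w => h (G w)) s = h (combine G s).
Proof.
move=> h_lin; rewrite /combine (linearf_sum h_lin).
by apply: eq_bigr => p _; rewrite (linearfZ h_lin).
Qed.

Lemma combine_linearl (T' : Type) (op : (T -> R) -> (T -> R) -> (T' -> R)) G s (g : T -> R) :
  linearf (fun x => op x g) -> combine (fun w => op (G w) g) s = op (combine G s) g.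
Proof. exact: combine_linear. Qed.

Lemma combine_linearr (T' : Type) (op : (T -> R) -> (T -> R) -> (T' -> R)) G s (f : T -> R) :
  linearf (op f) -> combine (fun w => op f (G w)) s = op f (combine G s).
Proof. exact: combine_linear. Qed.

Lemma eq_combine G H s : (forall w, G w = H w) -> combine G s = combine H s.
Proof. by move=> e; rewrite /combine; apply: eq_bigr => p _; rewrite e. Qed.

Lemma eq_in_combine G H s :
  (forall p, p \in s -> G p.2 = H p.2) -> combine G s = combine H s.
Proof.
move=> e; rewrite /combine big_seq_cond [RHS]big_seq_cond.
by apply: eq_bigr => p /andP[ps _]; rewrite e.
Qed.

Lemma combineD G H s : combine (fun w => G w + H w) s = combine G s + combine H s.
Proof.
by rewrite /combine -big_split; apply: eq_bigr => p _; rewrite (linearfD (scalef_linear _)).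
Qed.

Lemma combineN G s : combine (fun w => - G w) s = - combine G s.
Proof.
by rewrite /combine -sumrN; apply: eq_bigr => p _; rewrite (linearfN (scalef_linear _)).
Qed.

Lemma combineB G H s : combine (fun w => G w - H w) s = combine G s - combine H s.
Proof. by rewrite combineD combineN. Qed.

Lemma combineZ c G s : combine (fun w => scalef c (G w)) s = scalef c (combine G s).
Proof. exact: (combine_linear _ _ (scalef_linear c)). Qed.

Lemma combine_sum (I : Type) (r : seq I) (F : I -> word -> T -> R) s :
  combine (fun w => \sum_(i <- r) F i w) s = \sum_(i <- r) combine (F i) s.
Proof.
rewrite /combine exchange_big /=; apply: eq_bigr => p _.
by rewrite (linearf_sum (scalef_linear _)).
Qed.

Lemma combineC (G : word -> word -> T -> R) s t :
  combine (fun u => combine (G u) t) s = combine (fun v => combine (G^~ v) s) t.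
Proof.
rewrite /combine; under eq_bigr => p _ do rewrite (linearf_sum (scalef_linear _)).
rewrite exchange_big /=; apply: eq_bigr => q _.
rewrite (linearf_sum (scalef_linear _)); apply: eq_bigr => p _.
by rewrite !scalefA mulrC.
Qed.

End CombineTheory.

Definition delta (u : word) : word -> R := fun w => (w == u)%:R.

Definition vec (s : seq (R * word)) : word -> R := combine delta s.

Lemma combine_supp (T : Type) (G : word -> T -> R) s (U : seq word) :
  uniq U -> (forall p, p \in s -> p.2 \in U) ->
  combine G s = \sum_(w <- U) scalef (vec s w) (G w).
Proof.
move=> uniq_U; elim: s => [|p s IH] sU.
  by rewrite combine_nil big1 // => w _; rewrite /vec combine_nil scale0f.
rewrite combine_cons IH; last by move=> q s_q; apply: sU; rewrite inE s_q orbT.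
under [RHS]eq_bigr => w _ do rewrite /vec combine_cons fctE scalefDl -scalefA.
rewrite big_split /=; congr (_ + _).
have U_p : p.2 \in U by apply: sU; rewrite inE eqxx.
rewrite (bigD1_seq p.2 U_p uniq_U) /= /delta eqxx scalefA mulr1 big1 ?addr0 // => w ne_wp.
by rewrite (negbTE ne_wp) scalefA mulr0 scale0f.
Qed.

Lemma combine_vec (T : Type) (G : word -> T -> R) s t :
  vec s = vec t -> combine G s = combine G t.
Proof.
move=> st; set U := undup (map snd (s ++ t)).
have U_st p : p \in s ++ t -> p.2 \in U by move=> st_p; rewrite mem_undup map_f.
have uniq_U : uniq U by apply: undup_uniq.
rewrite (combine_supp G uniq_U) => [|p p_in]; last by apply: U_st; rewrite mem_cat p_in.
rewrite [RHS](combine_supp G uniq_U) => [|p p_in].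
  by rewrite st.
by apply: U_st; rewrite mem_cat p_in orbT.
Qed.

Lemma vec_fin_supp f : fin_supp f -> exists s, f = vec s.
Proof.
move=> [sw f0]; exists [seq (f w, w) | w <- undup sw]; apply/funext => x.
rewrite /vec /combine big_map fct_sumE /=.
have [x_in|x_out] := boolP (x \in undup sw).
  rewrite (bigD1_seq x x_in (undup_uniq sw)) /= /delta eqxx mulr1 big1 ?addr0 // => w ne_wx.
  by rewrite eq_sym (negbTE ne_wx) mulr0.
rewrite big1_seq; first by rewrite f0 // -mem_undup.
move=> w /andP[_ w_in]; rewrite /delta.
by case: eqP => [x_w|]; [move: x_out; rewrite x_w w_in|rewrite mulr0].
Qed.

Lemma amul_delta u v : amul (delta u) (delta v) = delta (u ++ v).
Proof.
apply/funext => w; rewrite /amul /delta.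
have cut_eq (i : 'I_(size w).+1) : (take i w == u)%:R * (drop i w == v)%:R =
    ((i == size u :> nat) && (w == u ++ v))%:R :> R.
  rewrite -natrM mulnb; congr ((nat_of_bool _)%:R); apply/andP/andP.
    move=> [/eqP <- /eqP <-]; rewrite cat_take_drop size_takel //.
    by rewrite -ltnS ltn_ord.
  by move=> [/eqP -> /eqP ->]; rewrite take_size_cat // drop_size_cat.
rewrite (eq_bigr _ (fun i _ => cut_eq i)).
have [w_uv|] := eqVneq w (u ++ v); last by rewrite big1 // => i _; rewrite andbF.
have lt_u : (size u < (size w).+1)%N by rewrite w_uv size_cat ltnS leq_addr.
rewrite (bigD1 (Ordinal lt_u)) //= eqxx big1 ?addr0 // => i /negbTE ne_iu.
by rewrite -val_eqE /= in ne_iu; rewrite ne_iu.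
Qed.

Lemma amul_vec s t : amul (vec s) (vec t) = vec (comb_mul s t).
Proof.
rewrite /vec combine_mul -(combine_linearl _ _ (amul_linearl _)).
apply: eq_combine => u; rewrite -(combine_linearr _ _ (amul_linearr _)).
by apply: eq_combine => v; rewrite amul_delta.
Qed.

End Combinations.

Section LieMonomials.
Variable R : realType.
Implicit Types (f g : word -> R).
Local Notation delta := (@delta R).

Inductive tree := Leaf of bool | Node of tree & tree.

Fixpoint deg (t : tree) : nat := if t is Node a b then deg a + deg b else 1.

Lemma deg_gt0 t : (0 < deg t)%N.
Proof. by elim: t => //= a IHa b _; rewrite addn_gt0 IHa. Qed.

Fixpoint lie (t : tree) : word -> R :=
  match t with
  | Leaf b => delta [:: b]
  | Node a b => bracket (lie a) (lie b)
  end.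

Fixpoint expand (t : tree) : seq (R * word) :=
  match t with
  | Leaf b => [:: (1, [:: b])]
  | Node a b => comb_mul (expand a) (expand b) ++ comb_opp (comb_mul (expand b) (expand a))
  end.

Lemma lieE t : lie t = vec (expand t).
Proof.
elim: t => [b|a IHa b IHb] /=; first by rewrite /vec combine_cons combine_nil addr0 scale1f.
by rewrite bracketE IHa IHb !amul_vec /vec combine_cat combine_opp.
Qed.

Lemma size_expand t p : p \in expand t -> size p.2 = deg t.
Proof.
elim: t p => [b|a IHa b IHb] p /=; first by rewrite inE => /eqP ->.
rewrite mem_cat => /orP[/allpairsP|/mapP[q /allpairsP]].
  by move=> -[[p1 q1] [/= /IHa s1 /IHb s2 ->]]; rewrite size_cat s1 s2.
by move=> -[[p1 q1] [/= /IHb s1 /IHa s2 ->]] ->; rewrite /= size_cat s1 s2 addnC.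
Qed.

Lemma expand_neq0 t p : p \in expand t -> p.2 != [::].
Proof. by move=> /size_expand s; rewrite -size_eq0 s -lt0n deg_gt0. Qed.

Lemma combine_expand_leaf (T : Type) (G : word -> T -> R) b :
  combine G (expand (Leaf b)) = G [:: b].
Proof. by rewrite combine_cons combine_nil addr0 scale1f. Qed.

Lemma combine_expand_node (T : Type) (G : word -> T -> R) a b :
  combine G (expand (Node a b)) =
    combine (fun u => combine (fun v => G (u ++ v)) (expand b)) (expand a)
  - combine (fun u => combine (fun v => G (u ++ v)) (expand a)) (expand b).
Proof. by rewrite /= combine_cat combine_opp !combine_mul. Qed.

Lemma inL0 : inL (0 : word -> R).
Proof. by move=> S []. Qed.

Lemma inLZ c f : inL f -> inL (scalef c f).
Proof. by move=> Lf S S_lie SX SY; case: (S_lie) => _ _ SZ _; apply: SZ; apply: Lf. Qed.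

Lemma inL_bracket f g : inL f -> inL g -> inL (bracket f g).
Proof.
by move=> Lf Lg S S_lie SX SY; case: (S_lie) => _ _ _ SB; apply: SB; [apply: Lf|apply: Lg].
Qed.

Lemma letterE b : letter R b = delta [:: b].
Proof. by apply/funext => w; rewrite /letter /delta; case: eqP. Qed.

Lemma inL_letter b : inL (delta [:: b]).
Proof. by rewrite -letterE; case: b => S _ SX SY. Qed.

Lemma inL_lie t : inL (lie t).
Proof. by elim: t => [b|a IHa b IHb] /=; [apply: inL_letter|apply: inL_bracket]. Qed.

Definition tree_comb (s : seq (R * tree)) : word -> R := \sum_(p <- s) scalef p.1 (lie p.2).

Lemma inL_tree_comb f : inL f -> exists s, f = tree_comb s.
Proof.
move=> Lf; apply: (Lf (fun f => exists s, f = tree_comb s)); last 2 first.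
- by exists [:: (1, Leaf false)]; rewrite /tree_comb big_seq1 scale1f /X letterE.
- by exists [:: (1, Leaf true)]; rewrite /tree_comb big_seq1 scale1f /Y letterE.
split.
- by exists [::]; rewrite /tree_comb big_nil.
- by move=> _ _ [s1 ->] [s2 ->]; exists (s1 ++ s2); rewrite /tree_comb big_cat.
- move=> c _ [s ->]; exists [seq (c * p.1, p.2) | p <- s].
  rewrite /tree_comb big_map -[ascale c _]/(scalef c _) (linearf_sum (scalef_linear c)).
  by apply: eq_bigr => p _; rewrite scalefA.
- move=> _ _ [s1 ->] [s2 ->]; exists [seq (p.1 * q.1, Node p.2 q.2) | p <- s1, q <- s2].
  rewrite /tree_comb big_allpairs_dep /= (linearf_sum (bracket_linearl _)).
  apply: eq_bigr => p _; rewrite (linearfZ (bracket_linearl _)).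
  rewrite (linearf_sum (bracket_linearr _)) (linearf_sum (scalef_linear _)).
  apply: eq_bigr => q _.
  by rewrite (linearfZ (bracket_linearr _)) scalefA mulrC.
Qed.

End LieMonomials.

Section LinearSpan.
Variables (R : realType) (T : Type) (P : (T -> R) -> Prop).

Lemma lspan0 : lspan P 0.
Proof. by exists 0%N, (fun _ => 0), (fun _ => 0); split => // t; rewrite big_ord0. Qed.

Lemma lspan_gen v : P v -> lspan P v.
Proof.
by move=> Pv; exists 1%N, (fun _ => 1), (fun _ => v); split => // t; rewrite big_ord1 mul1r.
Qed.

Lemma lspanD u v : lspan P u -> lspan P v -> lspan P (u + v).
Proof.
move=> [m1 [c1 [g1 [P1 u_eq]]]] [m2 [c2 [g2 [P2 v_eq]]]].
exists (m1 + m2)%N, (fun i => if (i < m1)%N then c1 i else c2 (i - m1)%N),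
  (fun i => if (i < m1)%N then g1 i else g2 (i - m1)%N); split.
  move=> i lt_i; case: ifP => [/P1 //|/negbT]; rewrite -leqNgt => le_i.
  by apply: P2; rewrite ltn_subLR.
move=> t; rewrite big_split_ord /= fctE u_eq v_eq; congr (_ + _).
  by apply: eq_bigr => i _; rewrite /= ltn_ord.
by apply: eq_bigr => i _; rewrite /= ltnNge leq_addr /= addKn.
Qed.

Lemma lspanZ c v : lspan P v -> lspan P (scalef c v).
Proof.
move=> [m [c1 [g [Pg v_eq]]]]; exists m, (fun i => c * c1 i), g; split => // t.
by rewrite /scalef v_eq big_distrr; apply: eq_bigr => i _ /=; rewrite mulrA.
Qed.

Lemma lspanN v : lspan P v -> lspan P (- v).
Proof. by move=> Pv; rewrite -scaleN1f; apply: lspanZ. Qed.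

Lemma lspan_sum (I : Type) (r : seq I) (Q : pred I) (F : I -> T -> R) :
  (forall i, Q i -> lspan P (F i)) -> lspan P (\sum_(i <- r | Q i) F i).
Proof.
move=> PF; elim/big_rec: _ => [|i v Qi Pv]; first exact: lspan0.
by apply: lspanD => //; apply: PF.
Qed.

End LinearSpan.

Section FreeLie.
Variable R : realType.
Implicit Types (x y z : word -> R) (t : tree).
Local Notation delta := (@delta R).
Local Notation lie := (@lie R).
Local Notation expand := (@expand R).

Definition adl (u : word) z := foldr (fun b z => bracket (delta [:: b]) z) z u.
Definition adr (u : word) y := foldl (fun y b => bracket y (delta [:: b])) y u.

Fixpoint rnormed (w : word) : word -> R :=
  match w with
  | [::] => 0
  | [:: b] => delta [:: b]
  | b :: w' => bracket (delta [:: b]) (rnormed w')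
  end.

Definition lnormed (w : word) : word -> R := if w is b :: w' then adr w' (delta [:: b]) else 0.

Lemma adl_cat u v z : adl (u ++ v) z = adl u (adl v z).
Proof. by rewrite /adl foldr_cat. Qed.

Lemma adr_cat u v y : adr (u ++ v) y = adr v (adr u y).
Proof. by rewrite /adr foldl_cat. Qed.

Lemma adl_linear u : linearf (adl u).
Proof. by elim: u => [|b u IH] c f f' //=; rewrite -/(adl u) IH (bracket_linearr _). Qed.

Lemma adr_linear u : linearf (adr u).
Proof. by elim: u => [|b u IH] c f f' //=; rewrite -/(adr u _) (bracket_linearl _) IH. Qed.

Lemma rnormed_cat u v : v != [::] -> rnormed (u ++ v) = adl u (rnormed v).
Proof.
move=> nz_v; elim: u => [|b u IH] //=; rewrite -IH.
by case: u {IH} => [|b' u]; case: v nz_v.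
Qed.

Lemma lnormed_cat u v : u != [::] -> lnormed (u ++ v) = adr v (lnormed u).
Proof. by case: u => [//|b u] _ /=; rewrite adr_cat. Qed.

Lemma inL_adl u z : inL z -> inL (adl u z).
Proof. by elim: u => [|b u IH] //= Lz; apply: inL_bracket; [apply: inL_letter|apply: IH]. Qed.

Lemma inL_adr u y : inL y -> inL (adr u y).
Proof.
by elim: u y => [|b u IH] y //= Ly; apply: IH; apply: inL_bracket => //; apply: inL_letter.
Qed.

Lemma inL_rnormed w : inL (rnormed w).
Proof.
elim: w => [|b [|b' w] IH] /=; [exact: inL0|exact: inL_letter|].
by apply: inL_bracket => //; apply: inL_letter.
Qed.

Lemma inL_lnormed w : inL (lnormed w).
Proof. by case: w => [|b w] /=; [apply: inL0|apply: inL_adr; apply: inL_letter]. Qed.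

Lemma combine_adl t z : combine (fun u => adl u z) (expand t) = bracket (lie t) z.
Proof.
elim: t z => [b|a IHa b IHb] z; first by rewrite combine_expand_leaf.
rewrite combine_expand_node.
under eq_combine => u do
  rewrite (eq_combine _ (fun v => adl_cat u v z)) (combine_linear _ _ (adl_linear u)) IHb.
under [X in _ - X]eq_combine => u do
  rewrite (eq_combine _ (fun v => adl_cat u v z)) (combine_linear _ _ (adl_linear u)) IHa.
by rewrite IHa IHb /= jacobi addrK.
Qed.

Lemma combine_adr t y : combine (fun v => adr v y) (expand t) = bracket y (lie t).
Proof.
elim: t y => [b|a IHa b IHb] y; first by rewrite combine_expand_leaf.
rewrite combine_expand_node.
under eq_combine => u do rewrite (eq_combine _ (fun v => adr_cat u v y)) IHb.
under [X in _ - X]eq_combine => u do rewrite (eq_combine _ (fun v => adr_cat u v y)) IHa.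
rewrite !(combine_linearl _ _ (bracket_linearl _)) IHa IHb /= jacobi.
by rewrite [bracket (lie a) (bracket y (lie b))]bracketC.
Qed.

Lemma combine_rnormed t : combine rnormed (expand t) = scalef (deg t)%:R (lie t).
Proof.
elim: t => [b|a IHa b IHb]; first by rewrite combine_expand_leaf scale1f.
have node d u : combine (fun v => rnormed (u ++ v)) (expand d) =
    adl u (combine rnormed (expand d)).
  rewrite -(combine_linear _ _ (adl_linear u)).
  by apply: eq_in_combine => p /expand_neq0 nz_p; rewrite rnormed_cat.
rewrite combine_expand_node.
under eq_combine => u do rewrite node IHb.
under [X in _ - X]eq_combine => u do rewrite node IHa.
rewrite !combine_adl /= (linearfZ (bracket_linearr _)) (linearfZ (bracket_linearr _)).
by rewrite [bracket (lie b) (lie a)]bracketC; pointwise; rewrite natrD; ring.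
Qed.

Lemma combine_lnormed t : combine lnormed (expand t) = scalef (deg t)%:R (lie t).
Proof.
elim: t => [b|a IHa b IHb]; first by rewrite combine_expand_leaf scale1f.
have node d u : u != [::] ->
    combine (fun v => lnormed (u ++ v)) (expand d) = bracket (lnormed u) (lie d).
  by move=> nz_u; rewrite -combine_adr; apply: eq_combine => v; rewrite lnormed_cat.
rewrite combine_expand_node.
rewrite (eq_in_combine (H := fun u => bracket (lnormed u) (lie b))); last first.
  by move=> p /expand_neq0; apply: node.
rewrite [X in _ - X](eq_in_combine (H := fun u => bracket (lnormed u) (lie a))); last first.
  by move=> p /expand_neq0; apply: node.
rewrite !(combine_linearl _ _ (bracket_linearl _)) IHa IHb /=.
rewrite (linearfZ (bracket_linearl _)) (linearfZ (bracket_linearl _)).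
by by rewrite [bracket (lie b) (lie a)]bracketC; pointwise; rewrite natrD; ring.
Qed.

Section CutSum.
Variables (T : Type) (beta : (word -> R) -> (word -> R) -> T -> R).
Hypotheses (beta_linl : forall y, linearf (beta^~ y)) (beta_linr : forall x, linearf (beta x)).

Definition cut_sum (w : word) : T -> R :=
  \sum_(0 <= k < (size w).+1) beta (rnormed (take k w)) (lnormed (drop k w)).

Lemma cut_sum_cat u v : u != [::] -> v != [::] ->
  cut_sum (u ++ v) =
    \sum_(0 <= k < (size u).+1) beta (rnormed (take k u)) (adr v (lnormed (drop k u)))
  + beta (rnormed u) (lnormed v)
  + \sum_(0 <= j < (size v).+1) beta (adl u (rnormed (take j v))) (lnormed (drop j v)).
Proof.
move=> nz_u nz_v; rewrite /cut_sum size_cat.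
have le_u : (size u <= (size u + size v).+1)%N by rewrite ltnW // ltnS leq_addr.
rewrite (big_cat_nat (leq0n _) le_u) /= -addrA.
rewrite [X in _ = X + _]big_nat_recr //= take_size drop_size /=.
rewrite (linearf0 (adr_linear v)) (linearf0 (beta_linr _)) addr0; congr (_ + _).
  apply: eq_big_nat => k /andP[_ lt_ku]; rewrite take_cat lt_ku drop_cat lt_ku lnormed_cat //.
  by rewrite -size_eq0 size_drop subn_eq0 -ltnNge.
rewrite -addnS -{1}[size u]add0n big_addn addKn big_nat_recl //.
rewrite [X in _ = _ + X]big_nat_recl //= take0 /= (linearf0 (adl_linear u)).
rewrite (linearf0 (beta_linl _)) add0r add0n take_size_cat // drop_size_cat //; congr (_ + _).
apply: eq_big_nat => j _; rewrite take_cat drop_cat ltnNge leq_addl /= addnK.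
by rewrite rnormed_cat //; case: (v) nz_v.
Qed.

Lemma combine_cut_sum_mul a b :
  combine cut_sum (comb_mul (expand a) (expand b)) =
    combine (fun u => \sum_(0 <= k < (size u).+1)
        beta (rnormed (take k u)) (bracket (lnormed (drop k u)) (lie b))) (expand a)
  + beta (combine rnormed (expand a)) (combine lnormed (expand b))
  + combine (fun v => \sum_(0 <= j < (size v).+1)
        beta (bracket (lie a) (rnormed (take j v))) (lnormed (drop j v))) (expand b).
Proof.
rewrite combine_mul; set rhs := (X in _ = X).
rewrite (eq_in_combine (H := fun u => combine (fun v =>
      \sum_(0 <= k < (size u).+1) beta (rnormed (take k u)) (adr v (lnormed (drop k u)))
    + beta (rnormed u) (lnormed v)
    + \sum_(0 <= j < (size v).+1) beta (adl u (rnormed (take j v))) (lnormed (drop j v)))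
    (expand b))); last first.
  move=> p /expand_neq0 nz_p; apply: eq_in_combine => q /expand_neq0 nz_q.
  exact: cut_sum_cat.
under eq_combine => u do rewrite !combineD.
rewrite !combineD /rhs; congr (_ + _ + _).
- apply: eq_combine => u; rewrite combine_sum; apply: eq_bigr => k _.
  by rewrite (combine_linearr _ _ (beta_linr _)) combine_adr.
- under eq_combine => u do rewrite (combine_linearr _ _ (beta_linr _)).
  exact: (combine_linearl _ _ (beta_linl _)).
- rewrite combineC; apply: eq_combine => v; rewrite combine_sum; apply: eq_bigr => j _.
  by rewrite (combine_linearl _ _ (beta_linl _)) combine_adl.
Qed.

End CutSum.

Lemma combine_cut_bracketl a b :
  combine (fun u => \sum_(0 <= k < (size u).+1)
      bracket (rnormed (take k u)) (bracket (lnormed (drop k u)) (lie b))) (expand a)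
  - combine (fun u => \sum_(0 <= k < (size u).+1)
      bracket (bracket (lie b) (rnormed (take k u))) (lnormed (drop k u))) (expand a)
  = bracket (combine (cut_sum (@bracket R)) (expand a)) (lie b).
Proof.
rewrite -combineB -(combine_linearl _ _ (bracket_linearl _)); apply: eq_combine => u.
rewrite -sumrB /cut_sum (linearf_sum (bracket_linearl _)); apply: eq_bigr => k _.
rewrite !bracketE !(linearfB (amul_linearl _)) !(linearfB (amul_linearr _)) !amulA.
by pointwise; ring.
Qed.

Lemma combine_cut_bracketr a b :
  combine (fun v => \sum_(0 <= j < (size v).+1)
      bracket (bracket (lie a) (rnormed (take j v))) (lnormed (drop j v))) (expand b)
  - combine (fun v => \sum_(0 <= j < (size v).+1)
      bracket (rnormed (take j v)) (bracket (lnormed (drop j v)) (lie a))) (expand b)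
  = bracket (lie a) (combine (cut_sum (@bracket R)) (expand b)).
Proof.
rewrite -combineB -(combine_linearr _ _ (bracket_linearr _)); apply: eq_combine => v.
rewrite -sumrB /cut_sum (linearf_sum (bracket_linearr _)); apply: eq_bigr => j _.
rewrite !bracketE !(linearfB (amul_linearl _)) !(linearfB (amul_linearr _)) !amulA.
by pointwise; ring.
Qed.

Lemma mul_pred_addn p q : (0 < p)%N -> (0 < q)%N ->
  ((p + q) * (p + q).-1 = p * p.-1 + (q * q.-1 + 2 * (p * q)))%N.
Proof. by case: p => // p; case: q => // q _ _; rewrite addSn /=; ring. Qed.

Lemma combine_cut_sum_bracket t :
  combine (cut_sum (@bracket R)) (expand t) = scalef (deg t * (deg t).-1)%:R (lie t).
Proof.
elim: t => [b|a IHa b IHb].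
  rewrite combine_expand_leaf /cut_sum big_mkord big_ord_recr big_ord1 /=.
  by rewrite (linearf0 (bracket_linearl _)) (linearf0 (bracket_linearr _)) addr0 scale0f.
rewrite [expand _]/= combine_cat combine_opp.
rewrite !(combine_cut_sum_mul (@bracket_linearl R) (@bracket_linearr R)).
have regroup (x1 x2 x3 y1 y2 y3 : word -> R) :
  x1 + x2 + x3 - (y1 + y2 + y3) = (x1 - y3) + (x2 - y2) + (x3 - y1) by pointwise; ring.
rewrite regroup combine_cut_bracketl combine_cut_bracketr IHa IHb.
rewrite !combine_rnormed !combine_lnormed /= mul_pred_addn ?deg_gt0 //.
rewrite !(linearfZ (bracket_linearl _)) !(linearfZ (bracket_linearr _)).
by rewrite [bracket (lie b) (lie a)]bracketC; pointwise; rewrite !natrD !natrM; ring.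
Qed.

End FreeLie.

Section PsiMap.
Variable R : realType.
Implicit Types (f g h y z : word -> R) (s t : seq (R * word)).
Local Notation delta := (@delta R).
Local Notation lie := (@lie R).
Local Notation expand := (@expand R).
Local Notation rnormed := (@rnormed R).
Local Notation lnormed := (@lnormed R).

Definition fl_eq (X Y : word * word -> R) := lspan (@FL_rel R) (X - Y).
Local Notation "X === Y" := (fl_eq X Y) (at level 70).

Lemma fl_eq_refl X : X === X.
Proof. by rewrite /fl_eq subrr; apply: lspan0. Qed.

Lemma fl_eq_sym X Y : X === Y -> Y === X.
Proof. by move=> eXY; rewrite /fl_eq -opprB; apply: lspanN. Qed.

Lemma fl_eq_trans X Y Z : X === Y -> Y === Z -> X === Z.
Proof. by move=> eXY eYZ; rewrite /fl_eq -(subrKA Y); apply: lspanD. Qed.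

Lemma fl_eqD X Y X' Y' : X === Y -> X' === Y' -> X + X' === Y + Y'.
Proof. by move=> e e'; rewrite /fl_eq opprD addrACA; apply: lspanD. Qed.

Lemma fl_eqZ c X Y : X === Y -> scalef c X === scalef c Y.
Proof. by move=> e; rewrite /fl_eq -(linearfB (scalef_linear c)); apply: lspanZ. Qed.

Lemma fl_eq_sum (I : Type) (r : seq I) (Q : pred I) (F G : I -> word * word -> R) :
  (forall i, Q i -> F i === G i) -> \sum_(i <- r | Q i) F i === \sum_(i <- r | Q i) G i.
Proof. by move=> e; rewrite /fl_eq -sumrB; apply: lspan_sum. Qed.

Lemma fl_eq_combine (G H : word -> word * word -> R) s :
  (forall p, p \in s -> G p.2 === H p.2) -> combine G s === combine H s.
Proof.
move=> e; rewrite /combine big_seq_cond [X in _ === X]big_seq_cond.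
by apply: fl_eq_sum => p /andP[s_p _]; apply/fl_eqZ/e.
Qed.

Lemma fl_eq_tensC f g : inL f -> inL g -> tens f g === tens g f.
Proof. by move=> Lf Lg; apply: lspan_gen; left; exists f, g. Qed.

Lemma fl_eq_tens_bracket f g h : inL f -> inL g -> inL h ->
  tens f (bracket g h) === tens (bracket f g) h.
Proof. by move=> Lf Lg Lh; apply: lspan_gen; right; exists f, g, h. Qed.

Lemma fl_eq_adl_adr u y z : inL y -> inL z -> tens y (adl u z) === tens (adr u y) z.
Proof.
elim: u y => [|b u IH] y Ly Lz; first exact: fl_eq_refl.
apply: fl_eq_trans (fl_eq_tens_bracket Ly (inL_letter b) (inL_adl u Lz)) _.
by apply: IH => //; apply: inL_bracket => //; apply: inL_letter.
Qed.

Definition head_tens (w : word) : word * word -> R :=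
  tens (delta [:: head false w]) (rnormed (behead w)).

Definition cyc_tens (w : word) : word * word -> R :=
  \sum_(0 <= k < size w) head_tens (rot k w).

Definition Psi (w : word) : word * word -> R :=
  scalef (size w * (size w).-1)%:R^-1 (cyc_tens w).

(* The k-th rotation x_(w_(k+1)) ⊗ [w_(k+2), ..., [w_n, [w_1, ..., w_k]]] is moved
   to [w_1, ..., w_k] ⊗ [[w_(k+1), w_(k+2)], ..., w_n] one letter at a time. *)
Lemma cyc_tens_cut_sum w : w != [::] -> cyc_tens w === head_tens w + cut_sum (@tens R) w.
Proof.
move=> nz_w; have w_gt0 : (0 < size w)%N by rewrite lt0n size_eq0.
rewrite /cyc_tens /cut_sum (big_ltn w_gt0) rot0 (big_ltn (ltn0Sn _)) take0 /=.
rewrite (big_nat_recr _ _ _ w_gt0) /= take_size drop_size /=.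
rewrite (linearf0 (tens_linearl _)) (linearf0 (tens_linearr _)) add0r addr0.
apply: fl_eqD; first exact: fl_eq_refl.
rewrite big_nat_cond [X in _ === X]big_nat_cond.
apply: fl_eq_sum => k /andP[/andP[k_gt0 lt_kw] _].
rewrite /rot (drop_nth false lt_kw) /head_tens /= rnormed_cat; last first.
  by rewrite -size_eq0 size_takel ?(ltnW lt_kw) // -lt0n.
apply: fl_eq_trans (fl_eq_adl_adr _ (inL_letter _) (inL_rnormed _)) _.
by apply: fl_eq_tensC; [apply: inL_adr; apply: inL_letter|apply: inL_rnormed].
Qed.

Lemma Psi_catC u v : Psi (u ++ v) = Psi (v ++ u).
Proof. by rewrite /Psi /cyc_tens sum_rot_catC !size_cat addnC. Qed.

Lemma eq_fl_eq X Y : X = Y -> X === Y.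
Proof. by move=> ->; apply: fl_eq_refl. Qed.

Lemma size_expand_mul a b p :
  p \in comb_mul (expand a) (expand b) -> size p.2 = (deg a + deg b)%N.
Proof.
by case/allpairsP => -[p1 q1] [/= /size_expand s1 /size_expand s2 ->]; rewrite size_cat s1 s2.
Qed.

Lemma combine_head_tens_mul a b :
  combine head_tens (comb_mul (expand a) (expand b)) ===
  tens (scalef (deg a)%:R (lie a)) (scalef (deg b)%:R (lie b)).
Proof.
set Lb := scalef (deg b)%:R (lie b).
have Lb_in : inL Lb by apply: inLZ; apply: inL_lie.
rewrite combine_mul.
rewrite (eq_in_combine (H := fun u => tens (delta [:: head false u]) (adl (behead u) Lb)));
  last first.
  move=> [c [|x u]] /expand_neq0 //= _.
  rewrite /Lb -combine_rnormed -(combine_linear _ _ (adl_linear u)).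
  rewrite -(combine_linearr _ _ (tens_linearr _)).
  by apply: eq_in_combine => q /expand_neq0 nz_q; rewrite /head_tens /= rnormed_cat.
apply: fl_eq_trans (_ : _ === combine (fun u => tens (lnormed u) Lb) (expand a)) _.
  apply: fl_eq_combine => -[c [|x u]] /expand_neq0 //= _.
  by apply: fl_eq_adl_adr; [apply: inL_letter|].
by rewrite (combine_linearl _ _ (tens_linearl _)) combine_lnormed; apply: fl_eq_refl.
Qed.

Lemma combine_cut_sum_tens_mul a b :
  combine (cut_sum (@tens R)) (comb_mul (expand a) (expand b)) ===
    tens (scalef (deg a * (deg a).-1)%:R (lie a)) (lie b)
  + tens (scalef (deg a)%:R (lie a)) (scalef (deg b)%:R (lie b))
  + tens (lie a) (scalef (deg b * (deg b).-1)%:R (lie b)).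
Proof.
rewrite (combine_cut_sum_mul (@tens_linearl R) (@tens_linearr R)).
rewrite combine_rnormed combine_lnormed -!combine_cut_sum_bracket.
apply: fl_eqD; [apply: fl_eqD; [|exact: fl_eq_refl]|].
- rewrite -(combine_linearl _ _ (tens_linearl _)); apply: fl_eq_combine => p _.
  rewrite /cut_sum !(linearf_sum (tens_linearl _)); apply: fl_eq_sum => k _.
  by apply: fl_eq_tens_bracket; [apply: inL_rnormed|apply: inL_lnormed|apply: inL_lie].
- rewrite -(combine_linearr _ _ (tens_linearr _)); apply: fl_eq_combine => p _.
  rewrite /cut_sum !(linearf_sum (tens_linearr _)); apply: fl_eq_sum => k _.
  by apply/fl_eq_sym/fl_eq_tens_bracket; [apply: inL_lie|apply: inL_rnormed|apply: inL_lnormed].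
Qed.

Lemma combine_cyc_tens_mul a b :
  combine cyc_tens (comb_mul (expand a) (expand b)) ===
  scalef ((deg a + deg b) * (deg a + deg b).-1)%:R (tens (lie a) (lie b)).
Proof.
set s := comb_mul _ _.
apply: fl_eq_trans (_ : _ === combine head_tens s + combine (cut_sum (@tens R)) s) _.
  rewrite -combineD; apply: fl_eq_combine => p /size_expand_mul size_p.
  by apply: cyc_tens_cut_sum; rewrite -size_eq0 size_p -lt0n addn_gt0 deg_gt0.
apply: fl_eq_trans (fl_eqD (combine_head_tens_mul a b) (combine_cut_sum_tens_mul a b)) _.
rewrite mul_pred_addn ?deg_gt0 // !(linearfZ (tens_linearl _)) !(linearfZ (tens_linearr _)).
by apply: eq_fl_eq; pointwise; rewrite !natrD !natrM; ring.
Qed.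

Lemma combine_Psi_mul a b :
  combine Psi (comb_mul (expand a) (expand b)) === tens (lie a) (lie b).
Proof.
set N := (deg a + deg b)%N.
rewrite (eq_in_combine (H := fun w => scalef (N * N.-1)%:R^-1 (cyc_tens w))); last first.
  by move=> p /size_expand_mul size_p; rewrite /Psi size_p.
have N_gt1 : (1 < N)%N by rewrite /N -(addn1 1) leq_add ?deg_gt0.
have N_neq0 : (N * N.-1)%:R != 0 :> R.
  by rewrite pnatr_eq0 muln_eq0 negb_or -!lt0n ltn_predRL N_gt1 (ltnW N_gt1).
rewrite combineZ; apply: fl_eq_trans (fl_eqZ _ (combine_cyc_tens_mul a b)) _.
by rewrite scalefA mulVf // scale1f; apply: fl_eq_refl.
Qed.

Lemma combine_Psi_comm s t : combine Psi (comb_mul s t ++ comb_opp (comb_mul t s)) = 0.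
Proof.
rewrite combine_cat combine_opp !combine_mul [X in _ - X]combineC.
by under eq_combine => u do under eq_combine => v do rewrite Psi_catC; rewrite subrr.
Qed.

(* [Psi_rel f X]: X ≡ Ψ(f), Ψ being computed on some representation of f; by
   [combine_vec] the choice of representation does not matter. *)
Definition Psi_rel f X := exists s, vec s = f /\ X === combine Psi s.

Lemma Psi_rel0 : Psi_rel 0 0.
Proof. by exists [::]; rewrite /vec !combine_nil; split => //; apply: fl_eq_refl. Qed.

Lemma Psi_relD f g X Y : Psi_rel f X -> Psi_rel g Y -> Psi_rel (f + g) (X + Y).
Proof.
move=> [s [<- eX]] [t [<- eY]]; exists (s ++ t).
by rewrite /vec !combine_cat; split => //; apply: fl_eqD.
Qed.

Lemma Psi_relZ c f X : Psi_rel f X -> Psi_rel (scalef c f) (scalef c X).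
Proof.
move=> [s [<- eX]]; exists (comb_scale c s).
by rewrite /vec !combine_scale; split => //; apply: fl_eqZ.
Qed.

Lemma Psi_rel_sum (I : Type) (r : seq I) (P : pred I) F (X : I -> word * word -> R) :
  (forall i, P i -> Psi_rel (F i) (X i)) ->
  Psi_rel (\sum_(i <- r | P i) F i) (\sum_(i <- r | P i) X i).
Proof.
move=> FX; elim/big_rec2: _ => [|i f Y Pi fY]; first exact: Psi_rel0.
by apply: Psi_relD => //; apply: FX.
Qed.

Lemma Psi_rel_lie_mul a b : Psi_rel (amul (lie a) (lie b)) (tens (lie a) (lie b)).
Proof.
exists (comb_mul (expand a) (expand b)); split; first by rewrite !lieE amul_vec.
by apply/fl_eq_sym/combine_Psi_mul.
Qed.

Lemma Psi_rel_mul f g : inL f -> inL g -> Psi_rel (amul f g) (tens f g).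
Proof.
move=> /inL_tree_comb[s ->] /inL_tree_comb[t ->].
rewrite /tree_comb (linearf_sum (amul_linearl _)) (linearf_sum (tens_linearl _)).
apply: Psi_rel_sum => p _; rewrite (linearfZ (amul_linearl _)) (linearfZ (tens_linearl _)).
apply: Psi_relZ; rewrite (linearf_sum (amul_linearr _)) (linearf_sum (tens_linearr _)).
apply: Psi_rel_sum => q _; rewrite (linearfZ (amul_linearr _)) (linearfZ (tens_linearr _)).
by apply: Psi_relZ; apply: Psi_rel_lie_mul.
Qed.

Lemma Psi_rel_comm f g : fin_supp f -> fin_supp g -> Psi_rel (amul f g - amul g f) 0.
Proof.
move=> /vec_fin_supp[s ->] /vec_fin_supp[t ->].
exists (comb_mul s t ++ comb_opp (comb_mul t s)); rewrite combine_Psi_comm.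
by rewrite !amul_vec /vec combine_cat combine_opp; split => //; apply: fl_eq_refl.
Qed.

Lemma Psi_rel_fl_eq f X Y : Psi_rel f X -> Psi_rel f Y -> X === Y.
Proof.
move=> [s [fs eX]] [t [ft eY]]; apply: fl_eq_trans eX _.
by rewrite (combine_vec _ (etrans fs (esym ft))); apply: fl_eq_sym.
Qed.

End PsiMap.

Theorem mainTheorem4 (R : realType) (n : nat) (a b : nat -> word -> R) :
  (forall i, (i < n)%N -> inL (a i) /\ inL (b i)) ->
  lspan (@comm_gen R) (fun w => \sum_(i < n) amul (a i) (b i) w) ->
  lspan (@FL_rel R) (fun p => \sum_(i < n) tens (a i) (b i) p).
Proof.
move=> ab_in [m [c [g [g_comm g_eq]]]].
have Psi_tens : Psi_rel (\sum_(i < n) amul (a i) (b i)) (\sum_(i < n) tens (a i) (b i)).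
  by apply: Psi_rel_sum => i _; have [a_in b_in] := ab_in i (ltn_ord i); apply: Psi_rel_mul.
have Psi_zero : Psi_rel (\sum_(i < n) amul (a i) (b i)) 0.
  have -> : \sum_(i < n) amul (a i) (b i) = \sum_(j < m) scalef (c j) (g j).
    by apply/funext => w; rewrite !fct_sumE g_eq.
  have -> : 0 = \sum_(j < m) scalef (c j) (0 : word * word -> R).
    by rewrite big1 // => j _; apply: (linearf0 (scalef_linear _)).
  apply: Psi_rel_sum => j _; apply: Psi_relZ.
  by have [p [q [p_fin [q_fin ->]]]] := g_comm j (ltn_ord j); apply: Psi_rel_comm.
by have := Psi_rel_fl_eq Psi_tens Psi_zero; rewrite /fl_eq subr0 fct_sumE.
Qed.
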